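(* Consider the discrete-time control system $x_{k+1}=f(x_k,u_k)$ with reward $r(x,u)=R-x^TQx$ and optimal discounted value $V_\gamma(x)=\sup_{\mathbf u}\sum_{k\ge0}\gamma^k r(\Psi(k,x,\mathbf u(k)),\mathbf u(k))$. Suppose the system is exponentially stabilizable in the following sense: there exist $M>0$ and $\lambda>0$ such that for each $x\in\mathbb R^n$ there is an infinite control sequence $\mathbf u$ with $R-r(\Psi(k,x,\mathbf u(k)),\mathbf u(k))\le M\|x\|^2e^{-\lambda k}$ for all $k\ge0$. Then for every $\gamma\in(0,1)$ and every $x\in\mathbb R^n$, $\frac{R}{1-\gamma}-V_\gamma(x)\le a_V\|x\|^2$ with $a_V=\frac{M}{1-e^{-\lambda}}$.
   Context: $x_k\in\mathbb R^n$, $u_k\in\mathcal U\subset\mathbb R^m$; $\Psi(k,x,\mathbf u(k))$ is the state at time $k$ starting from $x$ under the control sequence $\mathbf u$, and $\mathbf u(k)$ is its $k$-th input. $R>0$ is a constant and $Q$ is positive definite. *)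

From HB Require Import structures.
From mathcomp Require Import all_boot all_order all_algebra.
From mathcomp Require Import all_classical all_reals all_analysis.
Set Implicit Arguments. Unset Strict Implicit. Unset Printing Implicit Defensive.
Import Order.TTheory GRing.Theory Num.Theory.
Local Open Scope ring_scope.
Local Open Scope classical_set_scope.

Section Defs.
Variables (R : realType) (n m : nat).

Definition qform (Q : 'M[R]_n) (x : 'cV[R]_n) : R := (x^T *m Q *m x) 0 0.

Definition sqnorm (x : 'cV[R]_n) : R := (x^T *m x) 0 0.

Fixpoint Psi (f : 'cV[R]_n -> 'cV[R]_m -> 'cV[R]_n) (k : nat)
    (x : 'cV[R]_n) (u : nat -> 'cV[R]_m) : 'cV[R]_n :=
  match k with
  | 0 => x
  | k'.+1 => f (Psi f k' x u) (u k')
  end.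

Definition reward (Rc : R) (Q : 'M[R]_n) (x : 'cV[R]_n) (v : 'cV[R]_m) : R :=
  Rc - qform Q x.

Definition admissible (U : set 'cV[R]_m) (u : nat -> 'cV[R]_m) : Prop :=
  forall k, U (u k).

Definition disc_return (f : 'cV[R]_n -> 'cV[R]_m -> 'cV[R]_n)
    (Rc : R) (Q : 'M[R]_n) (gamma : R) (x : 'cV[R]_n) (u : nat -> 'cV[R]_m)
    : \bar R :=
  (\sum_(0 <= k <oo) ((gamma ^+ k * reward Rc Q (Psi f k x u) (u k))%:E))%E.

Definition Vgamma (f : 'cV[R]_n -> 'cV[R]_m -> 'cV[R]_n) (U : set 'cV[R]_m)
    (Rc : R) (Q : 'M[R]_n) (gamma : R) (x : 'cV[R]_n) : \bar R :=
  ereal_sup [set disc_return f Rc Q gamma x u | u in admissible U].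

End Defs.

From HB Require Import structures.
From mathcomp Require Import all_boot all_order all_algebra.
From mathcomp Require Import all_classical all_reals all_analysis.
Set Implicit Arguments. Unset Strict Implicit. Unset Printing Implicit Defensive.
Import Order.TTheory GRing.Theory Num.Theory.
Import numFieldNormedType.Exports.
Local Open Scope ring_scope.
Local Open Scope classical_set_scope.

(* Writing r = R - x^T Q x, the discounted return of a control sequence is
   R/(1-gamma) minus its discounted quadratic cost.  Under the stabilizing
   sequence that cost is dominated termwise by M ||x||^2 (e^{-lam})^k, so it
   sums to at most M ||x||^2 / (1 - e^{-lam}); the optimal value V_gamma can
   only be larger than this particular return. *)

Section GeometricDomination.
Variables (R : realType) (b : R ^nat) (C q : R).
Hypotheses (q_ge0 : 0 <= q) (q_lt1 : q < 1).
Hypothesis b_bounds : forall k, 0 <= b k <= C * q ^+ k.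

Let b_le_geometric k : b k <= geometric C q k.
Proof. by have /andP[] := b_bounds k. Qed.

Let C_ge0 : 0 <= C.
Proof.
by have /andP[b0_ge0] := b_bounds 0; rewrite expr0 mulr1; exact: le_trans.
Qed.

Let norm_q_lt1 : `|q| < 1. Proof. by rewrite ger0_norm. Qed.

Lemma is_cvg_series_le_geometric : cvgn (series b).
Proof.
apply: (series_le_cvg _ _ b_le_geometric).
- by move=> k; have /andP[] := b_bounds k.
- by move=> k; exact: geometric_ge0.
- exact: is_cvg_geometric_series.
Qed.

Lemma lim_series_le_geometric : limn (series b) <= C / (1 - q).
Proof.
rewrite -(cvg_lim _ (cvg_geometric_series (a := C) norm_q_lt1)) //.
apply: lim_series_le b_le_geometric.
- exact: is_cvg_series_le_geometric.
- exact: is_cvg_geometric_series.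
Qed.

End GeometricDomination.

Lemma qform_ge0 (R : realType) (n : nat) (Q : 'M[R]_n) (y : 'cV[R]_n) :
  (forall x : 'cV[R]_n, x != 0 -> 0 < qform Q x) -> 0 <= qform Q y.
Proof.
move=> Q_pd; have [->|/Q_pd/ltW //] := eqVneq y 0.
by rewrite /qform mulmx0 mxE.
Qed.

Section DiscountedReturn.
Variables (R : realType) (n m : nat) (f : 'cV[R]_n -> 'cV[R]_m -> 'cV[R]_n).
Variables (Rc : R) (Q : 'M[R]_n) (gamma : R).

Definition disc_cost (x : 'cV[R]_n) (u : nat -> 'cV[R]_m) : R ^nat :=
  fun k => gamma ^+ k * qform Q (Psi f k x u).

Lemma disc_returnE x u : `|gamma| < 1 -> cvgn (series (disc_cost x u)) ->
  disc_return f Rc Q gamma x u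
  = (Rc / (1 - gamma) - limn (series (disc_cost x u)))%:E.
Proof.
move=> gamma_lt1 cvg_cost.
have cvg_reward := cvg_geometric_series (a := Rc) gamma_lt1.
rewrite -(cvg_lim _ cvg_reward) // -lim_seriesB //; last exact: cvgP cvg_reward.
rewrite -EFin_lim; last by apply: is_cvg_seriesB => //; exact: cvgP cvg_reward.
congr (limn _); apply/funext => N /=.
rewrite sumEFin /series /=; congr (_%:E); apply: eq_bigr => k _.
by rewrite /reward /disc_cost /= mulrBr mulrC.
Qed.

Lemma disc_return_le_Vgamma (U : set 'cV[R]_m) x u : admissible U u ->
  (disc_return f Rc Q gamma x u <= Vgamma f U Rc Q gamma x)%E.
Proof. by move=> adm_u; apply: ereal_sup_ubound; exists u. Qed.

Lemma disc_cost_le_geometric x u (M lam : R) :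
  0 <= gamma -> gamma <= 1 -> (forall y : 'cV[R]_n, 0 <= qform Q y) ->
  (forall k, Rc - reward Rc Q (Psi f k x u) (u k)
               <= M * sqnorm x * expR (- (lam * k%:R))) ->
  forall k, 0 <= disc_cost x u k <= M * sqnorm x * expR (- lam) ^+ k.
Proof.
move=> gamma_ge0 gamma_le1 Q_psd decay k.
rewrite mulr_ge0 ?exprn_ge0 //=.
have := decay k; rewrite /reward opprB addrC subrK => qform_le.
rewrite -expRM_natl mulrN [k%:R * _]mulrC.
apply: le_trans qform_le; rewrite ler_piMl //.
by rewrite exprn_ile1.
Qed.

End DiscountedReturn.

Theorem proposition4 (R : realType) (n m : nat)
    (f : 'cV[R]_n -> 'cV[R]_m -> 'cV[R]_n) (U : set 'cV[R]_m)
    (Rc : R) (Q : 'M[R]_n)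
    (hRc : 0 < Rc)
    (hQsym : Q^T = Q)
    (hQpd : forall x : 'cV[R]_n, x != 0 -> 0 < qform Q x)
    (M lam : R) (hM : 0 < M) (hlam : 0 < lam)
    (hstab : forall x : 'cV[R]_n, exists u : nat -> 'cV[R]_m,
        admissible U u /\
        forall k : nat,
          Rc - reward Rc Q (Psi f k x u) (u k)
            <= M * sqnorm x * expR (- (lam * k%:R))) :
  forall (gamma : R), 0 < gamma < 1 -> forall x : 'cV[R]_n,
    ((Rc / (1 - gamma))%:E - Vgamma f U Rc Q gamma x
      <= (M / (1 - expR (- lam)) * sqnorm x)%:E)%E.
Proof.
move=> gamma /andP[gamma_gt0 gamma_lt1] x.
have [u [adm_u decay]] := hstab x.
have q_ge0 : 0 <= expR (- lam) by rewrite expR_ge0.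
have q_lt1 : expR (- lam) < 1 by rewrite expR_lt1 oppr_lt0.
have Q_psd y : 0 <= qform Q y by exact: qform_ge0.
have cost_bounds :=
  disc_cost_le_geometric (ltW gamma_gt0) (ltW gamma_lt1) Q_psd decay.
have cost_cvg := is_cvg_series_le_geometric q_ge0 q_lt1 cost_bounds.
have cost_le := lim_series_le_geometric q_ge0 q_lt1 cost_bounds.
apply: le_trans (leeB (lexx _) (disc_return_le_Vgamma f Rc Q gamma x adm_u)) _.
have gamma_norm_lt1 : `|gamma| < 1 by rewrite ger0_norm ?ltW.
rewrite disc_returnE // -EFinB lee_fin opprB addrC subrK.
by rewrite mulrAC; exact: cost_le.
Qed.
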